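(* Let $K_{c2}>0$ and let $K\mapsto\theta^*(K)$, $K\in(K_{c2},K_0)$, be a continuously differentiable family of stable phase-locked steady states of the Kuramoto network with coupling strength $K$. Let $\lambda_2(K)<0$ be the largest nonzero eigenvalue of the Jacobian $J(K)$ at $\theta^*(K)$ with a unit eigenvector $v_2(K)$. Suppose the phase-locked state loses stability at $K_{c2}$ in the sense that $\lambda_2(K)\to 0$ as $K\to K_{c2}^+$, and suppose $v_2\cdot\omega\neq 0$ in the limit, i.e. there is $c>0$ with $|v_2(K)\cdot\omega|\ge c$ for all $K$ near $K_{c2}$. Then $$\frac{d r_{\rm uni}(\theta^*(K))}{dK}\to+\infty\quad\text{as } K\to K_{c2}^+ .$$
   Context: Kuramoto network: $N\ge 2$ oscillators with phases $\theta_i(t)$ obeying $\frac{d\theta_i}{dt}=\omega_i+K\sum_{j=1}^N A_{i,j}\sin(\theta_j-\theta_i)$, where $\omega=(\omega_1,\dots,\omega_N)^T\in\mathbb{R}^N$ are natural frequencies with $\sum_{i=1}^N\omega_i=0$, $K>0$ is the coupling strength, and $A=(A_{i,j})$ is the symmetric adjacency matrix ($A_{i,j}=A_{j,i}\in\{0,1\}$, $A_{i,i}=0$) of a connected undirected graph; $k_i=\sum_j A_{i,j}$ is the degree of node $i$. A phase-locked steady state is a vector $\theta^*\in\mathbb{R}^N$ with $\omega_i+K\sum_j A_{i,j}\sin(\theta_j^*-\theta_i^* )=0$ for all $i$. Its Jacobian $J$ is the symmetric matrix with $J_{i,j}=KA_{i,j}\cos(\theta_i^*-\theta_j^* )$ for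 $i\neq j$ and $J_{i,i}=-K\sum_j A_{i,j}\cos(\theta_i^*-\theta_j^* )$; it always has eigenvalue $\lambda_1=0$ with eigenvector $(1,\dots,1)^T$. The state is called stable if all remaining eigenvalues $\lambda_2\ge\dots\ge\lambda_N$ of $J$ are strictly negative. $K_{c2}$ denotes the critical coupling at which the fully phase-locked state appears/loses stability (in a saddle-node bifurcation). The order parameter is $r_{\rm uni}=\frac{1}{\sum_i k_i}\sum_{i,j}A_{i,j}\langle\cos(\theta_i-\theta_j)\rangle_t$, which for a steady state equals $r_{\rm uni}(\theta^* )=\frac{1}{\sum_i k_i}\sum_{i,j}A_{i,j}\cos(\theta_i^*-\theta_j^* )$. *)

From Stdlib Require Import Reals Lra Lia.
Open Scope R_scope.

Fixpoint rsum (n : nat) (f : nat -> R) : R :=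
  match n with
  | O => 0
  | S m => rsum m f + f m
  end.

Definition adjacency (N : nat) (A : nat -> nat -> R) : Prop :=
  (forall i j, (i < N)%nat -> (j < N)%nat -> A i j = 0 \/ A i j = 1) /\
  (forall i j, (i < N)%nat -> (j < N)%nat -> A i j = A j i) /\
  (forall i, (i < N)%nat -> A i i = 0).

Inductive reachable (N : nat) (A : nat -> nat -> R) (i : nat) : nat -> Prop :=
  | reach_refl : reachable N A i i
  | reach_step : forall j k, reachable N A i j -> (k < N)%nat -> A j k = 1 ->
                   reachable N A i k.

Definition connected (N : nat) (A : nat -> nat -> R) : Prop :=
  forall i j, (i < N)%nat -> (j < N)%nat -> reachable N A i j.

Definition degree (N : nat) (A : nat -> nat -> R) (i : nat) : R :=
  rsum N (fun j => A i j).

Definition steady_state (N : nat) (A : nat -> nat -> R) (omega : nat -> R)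
  (K : R) (th : nat -> R) : Prop :=
  forall i, (i < N)%nat ->
    omega i + K * rsum N (fun j => A i j * sin (th j - th i)) = 0.

Definition jacobian (N : nat) (A : nat -> nat -> R) (K : R) (th : nat -> R)
  (i j : nat) : R :=
  if Nat.eqb i j then - K * rsum N (fun l => A i l * cos (th i - th l))
  else K * A i j * cos (th i - th j).

Definition eigenpair (N : nat) (M : nat -> nat -> R) (mu : R) (w : nat -> R) : Prop :=
  (exists i, (i < N)%nat /\ w i <> 0) /\
  (forall i, (i < N)%nat -> rsum N (fun j => M i j * w j) = mu * w i).

(* Stability: all eigenvalues other than the trivial lambda_1 = 0 (eigenvector
   (1,...,1)) are strictly negative.  Since J is symmetric, these "remaining"
   eigenvalues (with multiplicity) are exactly the eigenvalues of J restricted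
   to the invariant subspace orthogonal to (1,...,1). *)
Definition stable (N : nat) (A : nat -> nat -> R) (K : R) (th : nat -> R) : Prop :=
  forall mu w, eigenpair N (jacobian N A K th) mu w -> rsum N w = 0 -> mu < 0.

Definition dot (N : nat) (u v : nat -> R) : R := rsum N (fun i => u i * v i).

Definition r_uni (N : nat) (A : nat -> nat -> R) (th : nat -> R) : R :=
  rsum N (fun i => rsum N (fun j => A i j * cos (th i - th j)))
  / rsum N (fun i => degree N A i).

(* Differentiating the steady-state equations in K shows that th' = d theta*/dK
   solves J th' = omega / K, while the antisymmetry of sin turns the numerator of
   d r_uni / dK into -(2/K) <th', omega> = -2 <th', J th'>.  Stability makes the
   symmetric matrix J negative semidefinite, so the Cauchy-Schwarz inequality for
   the form -J gives
     (<v2, omega> / K)^2 = <v2, J th'>^2 <= <v2, J v2> <th', J th'> = lambda2 <th', J th'>.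
   Hence d r_uni / dK >= 2 <v2, omega>^2 / (K^2 |lambda2| sum_i k_i), which blows up
   as lambda2 -> 0 while |<v2, omega>| stays bounded below. *)

From Stdlib Require Import Reals Lra Lia Classical FunctionalExtensionality.
From mathcomp Require ssreflect ssrfun ssrbool eqtype ssrnat fintype bigop ssralg matrix mxalgebra Rstruct.
Open Scope R_scope.

Lemma rsum_ext n f g : (forall i, (i < n)%nat -> f i = g i) -> rsum n f = rsum n g.
Proof.
  induction n; intros H; simpl; [reflexivity|].
  rewrite IHn by (intros; apply H; lia). rewrite H by lia. reflexivity.
Qed.

Lemma rsum_0 n : rsum n (fun _ => 0) = 0.
Proof. induction n; simpl; [|rewrite IHn]; lra. Qed.

Lemma rsum_const n k : rsum n (fun _ => k) = INR n * k.
Proof. induction n; simpl rsum; [simpl; lra|]. rewrite IHn, S_INR. lra. Qed.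

Lemma rsum_plus n f g : rsum n (fun i => f i + g i) = rsum n f + rsum n g.
Proof. induction n; simpl; [|rewrite IHn]; lra. Qed.

Lemma rsum_minus n f g : rsum n (fun i => f i - g i) = rsum n f - rsum n g.
Proof. induction n; simpl; [|rewrite IHn]; lra. Qed.

Lemma rsum_scal n c f : rsum n (fun i => c * f i) = c * rsum n f.
Proof. induction n; simpl; [|rewrite IHn]; lra. Qed.

Lemma rsum_swap n m (f : nat -> nat -> R) :
  rsum n (fun i => rsum m (fun j => f i j)) = rsum m (fun j => rsum n (fun i => f i j)).
Proof.
  induction n; simpl.
  - rewrite rsum_0. reflexivity.
  - rewrite IHn, <- rsum_plus. reflexivity.
Qed.

Lemma rsum_le n f g : (forall i, (i < n)%nat -> f i <= g i) -> rsum n f <= rsum n g.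
Proof.
  induction n; intros H; simpl; [lra|].
  assert (rsum n f <= rsum n g) by (apply IHn; intros; apply H; lia).
  assert (f n <= g n) by (apply H; lia). lra.
Qed.

Lemma rsum_nonneg n f : (forall i, (i < n)%nat -> 0 <= f i) -> 0 <= rsum n f.
Proof. intros H. rewrite <- (rsum_0 n). apply rsum_le. exact H. Qed.

Lemma rsum_ge_term n f i :
  (forall j, (j < n)%nat -> 0 <= f j) -> (i < n)%nat -> f i <= rsum n f.
Proof.
  induction n; intros H Hi; simpl; [lia|].
  assert (0 <= rsum n f) by (apply rsum_nonneg; intros; apply H; lia).
  destruct (Nat.eq_dec i n) as [->|Hne]; [lra|].
  assert (f i <= rsum n f) by (apply IHn; [intros; apply H; lia | lia]).
  assert (0 <= f n) by (apply H; lia). lra.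
Qed.

Lemma rsum_delta n i f : (i < n)%nat ->
  rsum n (fun j => if Nat.eqb i j then f j else 0) = f i.
Proof.
  induction n; intros Hi; simpl; [lia|].
  destruct (Nat.eq_dec i n) as [->|Hne].
  - rewrite Nat.eqb_refl, (rsum_ext n _ (fun _ => 0)), rsum_0; [lra|].
    intros j Hj. destruct (Nat.eqb_spec n j); [lia|reflexivity].
  - rewrite IHn by lia. destruct (Nat.eqb_spec i n); [lia|lra].
Qed.

Lemma Rabs_rsum_le n f : Rabs (rsum n f) <= rsum n (fun i => Rabs (f i)).
Proof.
  induction n; simpl.
  - rewrite Rabs_R0. lra.
  - eapply Rle_trans; [apply Rabs_triang|]. lra.
Qed.

Lemma dot_ext N u v u' v' : (forall i, (i < N)%nat -> u i = u' i) ->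
  (forall i, (i < N)%nat -> v i = v' i) -> dot N u v = dot N u' v'.
Proof. intros Hu Hv. apply rsum_ext; intros. rewrite Hu, Hv by lia. reflexivity. Qed.

Lemma dot_comm N u v : dot N u v = dot N v u.
Proof. apply rsum_ext; intros; ring. Qed.

Lemma dot_nonneg N x : 0 <= dot N x x.
Proof. apply rsum_nonneg; intros; apply Rle_0_sqr. Qed.

Lemma quadratic_nonneg_discriminant a b c :
  0 <= c -> (forall t, 0 <= a + 2 * b * t + c * t * t) -> b * b <= a * c.
Proof.
  intros Hc H.
  destruct (Rle_lt_or_eq_dec 0 c Hc) as [Hc'|<-].
  - pose proof (H (- b / c)) as H1.
    replace (a + 2 * b * (- b / c) + c * (- b / c) * (- b / c)) with
      ((a * c - b * b) / c) in H1 by (field; lra).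
    assert (0 <= a * c - b * b); [|lra].
    apply Rmult_le_reg_r with (/ c); [apply Rinv_0_lt_compat; lra|].
    rewrite Rmult_0_l. exact H1.
  - destruct (Req_dec b 0) as [->|Hb]; [lra|].
    pose proof (H (- (a + 1) / (2 * b))) as H1.
    replace (a + 2 * b * (- (a + 1) / (2 * b)) + 0 * (- (a + 1) / (2 * b)) * (- (a + 1) / (2 * b)))
      with (-1) in H1 by (field; lra). lra.
Qed.

Lemma cauchy_schwarz N x y : dot N x y * dot N x y <= dot N x x * dot N y y.
Proof.
  rewrite (Rmult_comm (dot N x x)).
  apply quadratic_nonneg_discriminant; [apply dot_nonneg|].
  intros t.
  replace (dot N y y + 2 * dot N x y * t + dot N x x * t * t) with
    (dot N (fun i => y i + t * x i) (fun i => y i + t * x i)); [apply dot_nonneg|].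
  unfold dot. induction N; simpl; [ring|]. rewrite IHN. ring.
Qed.

Module InjectiveInverse.
Import ssreflect ssrfun ssrbool eqtype ssrnat fintype bigop ssralg matrix mxalgebra Rstruct.
Import GRing.Theory.

Lemma rsum_big n (f : nat -> R) : rsum n f = (\sum_(i < n) f i)%R.
Proof.
elim: n => [|n IH] /=; first by rewrite big_ord0.
by rewrite big_ord_recr /= IH.
Qed.

Definition ext {n} (v : 'I_n -> R) (k : nat) : R :=
  (\sum_(l < n) (if val l == k then v l else 0))%R.

Lemma extE n (v : 'I_n -> R) (l : 'I_n) : ext v l = v l.
Proof.
rewrite /ext (bigD1 l) //= eqxx big1 ?addr0 // => m ml.
by case: eqP => // /val_inj E; rewrite E eqxx in ml.
Qed.

Lemma injective_mx_inverse (N : nat) (P : nat -> nat -> R) :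
  (forall x : nat -> R, (forall j, (j < N)%coq_nat -> rsum N (fun k => P j k * x k) = 0) ->
     forall i, (i < N)%coq_nat -> x i = 0) ->
  exists B : nat -> nat -> R, forall (x : nat -> R) i, (i < N)%coq_nat ->
    x i = rsum N (fun j => rsum N (fun k => P j k * x k) * B j i).
Proof.
move=> Hinj.
pose A : 'M[R]_N := (\matrix_(i, j) P j i)%R.
have rfA : row_free A.
  rewrite -kermx_eq0; apply/eqP/row_matrixP => i; rewrite row0.
  pose u := row i (kermx A).
  have uA : (u *m A = 0)%R by apply/sub_kermxP; exact: row_sub.
  apply/rowP => k; rewrite [RHS]mxE.
  have := Hinj (ext (fun l => u ord0 l)) _ k (ltP (ltn_ord k)).
  rewrite extE; apply => j /ltP jN.
  rewrite rsum_big.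
  apply: (@eq_trans _ _ ((u *m A)%R ord0 (Ordinal jN))); last by rewrite uA mxE.
  by rewrite mxE; apply: eq_bigr => l _; rewrite extE !mxE mulrC.
have uA : A \in unitmx by rewrite -row_free_unit.
exists (fun j i => ext (fun a => ext (fun b => invmx A a b) i) j).
move=> x i /ltP iN.
pose xr : 'rV[R]_N := (\row_k x k)%R.
have := congr1 (fun M : 'rV[R]_N => M ord0 (Ordinal iN)) (mulmxK uA xr).
rewrite !mxE => <-.
rewrite rsum_big; apply: eq_bigr => j _.
rewrite extE !mxE rsum_big.
congr (_ * _)%R; last by rewrite (extE _ (fun b => invmx A j b) (Ordinal iN)).
by apply: eq_bigr => k _; rewrite !mxE mulrC.
Qed.

End InjectiveInverse.

Section QuadraticForms.
Variable N : nat.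

Definition matvec (M : nat -> nat -> R) (x : nat -> R) (i : nat) : R :=
  rsum N (fun j => M i j * x j).

Definition qform (M : nat -> nat -> R) (x : nat -> R) : R := dot N x (matvec M x).

Definition symmetric_mx (M : nat -> nat -> R) : Prop :=
  forall i j, (i < N)%nat -> (j < N)%nat -> M i j = M j i.

Definition nonpos_form (M : nat -> nat -> R) : Prop := forall x, qform M x <= 0.

Lemma dot_matvec_sym M x y : symmetric_mx M -> dot N x (matvec M y) = dot N (matvec M x) y.
Proof.
  intros HM. unfold dot, matvec.
  transitivity (rsum N (fun i => rsum N (fun j => x i * M i j * y j))).
  { apply rsum_ext; intros i Hi. rewrite <- rsum_scal. apply rsum_ext; intros; ring. }
  rewrite rsum_swap. apply rsum_ext; intros j Hj.
  rewrite Rmult_comm, <- rsum_scal. apply rsum_ext; intros i Hi.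
  rewrite (HM i j Hi Hj). ring.
Qed.

Lemma qform_add_scal M x y t : symmetric_mx M ->
  qform M (fun i => x i + t * y i) =
  qform M x + 2 * dot N x (matvec M y) * t + qform M y * t * t.
Proof.
  intros HM. unfold qform.
  rewrite (dot_ext N _ _ (fun i => x i + t * y i) (fun i => matvec M x i + t * matvec M y i))
    by (intros; auto; unfold matvec; rewrite <- rsum_scal, <- rsum_plus; apply rsum_ext; intros; ring).
  assert (Hyx : dot N y (matvec M x) = dot N x (matvec M y))
    by (rewrite (dot_matvec_sym M y x HM); apply dot_comm).
  assert (E : dot N (fun i => x i + t * y i) (fun i => matvec M x i + t * matvec M y i) =
    dot N x (matvec M x) + t * dot N x (matvec M y) + t * dot N y (matvec M x)
    + t * t * dot N y (matvec M y)).
  { unfold dot. rewrite <- !rsum_scal, <- !rsum_plus. apply rsum_ext; intros; ring. }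
  rewrite E, Hyx. ring.
Qed.

Lemma nonpos_form_cauchy_schwarz M x y : symmetric_mx M -> nonpos_form M ->
  dot N x (matvec M y) * dot N x (matvec M y) <= qform M x * qform M y.
Proof.
  intros HM Hneg.
  replace (qform M x * qform M y) with ((- qform M x) * (- qform M y)) by ring.
  replace (dot N x (matvec M y) * dot N x (matvec M y)) with
    ((- dot N x (matvec M y)) * (- dot N x (matvec M y))) by ring.
  apply quadratic_nonneg_discriminant; [pose proof (Hneg y); lra|].
  intros t. pose proof (Hneg (fun i => x i + t * y i)) as H.
  rewrite qform_add_scal in H by exact HM. lra.
Qed.

Definition entry_norm (M : nat -> nat -> R) : R :=
  rsum N (fun i => rsum N (fun j => Rabs (M i j))).

Lemma entry_norm_nonneg M : 0 <= entry_norm M.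
Proof. apply rsum_nonneg; intros; apply rsum_nonneg; intros; apply Rabs_pos. Qed.

Lemma Rabs_qform_le M x : Rabs (qform M x) <= entry_norm M * dot N x x.
Proof.
  unfold qform, entry_norm. eapply Rle_trans; [apply Rabs_rsum_le|].
  rewrite Rmult_comm, <- rsum_scal. apply rsum_le; intros i Hi.
  unfold matvec. rewrite Rabs_mult.
  eapply Rle_trans; [apply (Rmult_le_compat_l (Rabs (x i))); [apply Rabs_pos|apply Rabs_rsum_le]|].
  rewrite <- !rsum_scal. apply rsum_le; intros j Hj.
  rewrite Rabs_mult.
  assert (Hsq : forall k, (k < N)%nat -> Rabs (x k) * Rabs (x k) <= dot N x x).
  { intros k Hk. rewrite <- Rabs_mult, Rabs_right by (apply Rle_ge, Rle_0_sqr).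
    apply (rsum_ge_term N (fun l => x l * x l)); [intros; apply Rle_0_sqr|exact Hk]. }
  pose proof (Hsq i Hi). pose proof (Hsq j Hj).
  pose proof (Rabs_pos (x i)). pose proof (Rabs_pos (x j)). pose proof (Rabs_pos (M i j)).
  assert (Rabs (x i) * Rabs (x j) <= dot N x x) by nra.
  nra.
Qed.

Definition trivial_kernel (M : nat -> nat -> R) : Prop :=
  forall x, (forall i, (i < N)%nat -> matvec M x i = 0) -> forall i, (i < N)%nat -> x i = 0.

Lemma trivial_kernel_lower_bound M : trivial_kernel M ->
  exists C, 0 < C /\ forall y, dot N y y <= C * dot N (matvec M y) (matvec M y).
Proof.
  intros Hker. destruct (InjectiveInverse.injective_mx_inverse N M Hker) as [B HB].
  set (C := rsum N (fun i => rsum N (fun j => B j i * B j i)) + 1).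
  assert (HC : 0 <= rsum N (fun i => rsum N (fun j => B j i * B j i)))
    by (apply rsum_nonneg; intros; apply rsum_nonneg; intros; apply Rle_0_sqr).
  exists C. split; [unfold C; lra|]. intros y.
  apply Rle_trans with
    (dot N (matvec M y) (matvec M y) * rsum N (fun i => rsum N (fun j => B j i * B j i))).
  - rewrite <- rsum_scal. apply rsum_le; intros i Hi.
    rewrite (HB y i Hi). apply (cauchy_schwarz N (matvec M y) (fun j => B j i)).
  - pose proof (dot_nonneg N (matvec M y)). unfold C. nra.
Qed.

Lemma nonpos_form_coercive M : symmetric_mx M -> nonpos_form M -> trivial_kernel M ->
  exists eps, 0 < eps /\ forall y, qform M y <= - eps * dot N y y.
Proof.
  intros HM Hneg Hker.
  destruct (trivial_kernel_lower_bound M Hker) as [C [HC Hlow]].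
  set (L := entry_norm M + 1).
  assert (HL : 0 < L) by (pose proof (entry_norm_nonneg M); unfold L; lra).
  exists (/ (C * L)). split; [apply Rinv_0_lt_compat, Rmult_lt_0_compat; lra|]. intros y.
  set (z := matvec M y).
  assert (Hz : dot N z z <= - L * qform M y).
  { pose proof (nonpos_form_cauchy_schwarz M z y HM Hneg) as Hcs. fold z in Hcs.
    pose proof (Rabs_qform_le M z) as Hb. pose proof (Rle_abs (- qform M z)) as Ha.
    rewrite Rabs_Ropp in Ha.
    pose proof (Hneg y) as Hy0. pose proof (dot_nonneg N z) as Hz0.
    assert (Hqz : - qform M z <= L * dot N z z) by (unfold L; lra).
    assert (qform M z * qform M y <= L * dot N z z * - qform M y) by nra.
    destruct (Rle_lt_or_eq_dec 0 _ Hz0) as [Hpos|<-]; [|nra].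
    apply Rmult_le_reg_r with (dot N z z); [exact Hpos|]. nra. }
  pose proof (Hlow y) as Hy. fold z in Hy.
  assert (HCL : 0 < C * L) by (apply Rmult_lt_0_compat; lra).
  apply Rmult_le_reg_l with (C * L); [exact HCL|].
  replace (C * L * (- / (C * L) * dot N y y)) with (- dot N y y) by (field; lra).
  nra.
Qed.

End QuadraticForms.

Section StableForms.
Variables (N : nat) (J : nat -> nat -> R).
Hypothesis HJ : symmetric_mx N J.
Hypothesis Hrow : forall i, (i < N)%nat -> rsum N (fun j => J i j) = 0.

Lemma rsum_matvec_zero_rows y : rsum N (matvec N J y) = 0.
Proof.
  unfold matvec. rewrite rsum_swap, (rsum_ext N _ (fun _ => 0)); [apply rsum_0|].
  intros j Hj. rewrite (rsum_ext N _ (fun i => y j * J j i)).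
  - rewrite rsum_scal, Hrow by exact Hj. ring.
  - intros i Hi. rewrite (HJ i j Hi Hj). ring.
Qed.

Lemma qform_add_const u c : qform N J (fun i => u i + c) = qform N J u.
Proof.
  unfold qform.
  rewrite (dot_ext N _ _ (fun i => u i + c) (matvec N J u)); [| reflexivity |].
  - unfold dot. rewrite (rsum_ext N _ (fun i => u i * matvec N J u i + c * matvec N J u i))
      by (intros; ring).
    rewrite rsum_plus, rsum_scal. fold (dot N u (matvec N J u)).
    rewrite rsum_matvec_zero_rows. ring.
  - intros i Hi. unfold matvec.
    rewrite (rsum_ext N _ (fun j => J i j * u j + c * J i j)) by (intros; ring).
    rewrite rsum_plus, rsum_scal, Hrow by exact Hi. ring.
Qed.

Lemma dot_add_const u c : rsum N u = 0 ->
  dot N (fun i => u i + c) (fun i => u i + c) = dot N u u + c * c * INR N.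
Proof.
  intros Hu. unfold dot.
  rewrite (rsum_ext N _ (fun i => u i * u i + (2 * c) * u i + c * c)) by (intros; ring).
  rewrite !rsum_plus, rsum_scal, Hu, rsum_const. ring.
Qed.

Lemma decompose_mean_zero x : (0 < N)%nat ->
  exists u c, rsum N u = 0 /\ x = (fun i => u i + c).
Proof.
  intros HN. set (c := rsum N x / INR N). exists (fun i => x i - c), c. split.
  - rewrite rsum_minus, rsum_const. unfold c. field. apply not_0_INR. lia.
  - apply functional_extensionality. intros; ring.
Qed.

Lemma qform_nonpos_of_dot_zero u : dot N u u = 0 -> qform N J u <= 0.
Proof.
  intros Hu. pose proof (Rabs_qform_le N J u) as H. rewrite Hu, Rmult_0_r in H.
  pose proof (Rle_abs (qform N J u)). lra.
Qed.

Definition rayleigh_bound (mu : R) : Prop :=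
  forall u, rsum N u = 0 -> qform N J u <= mu * dot N u u.

Lemma least_rayleigh_bound u0 : rsum N u0 = 0 -> 0 < qform N J u0 ->
  exists mu, 0 < mu /\ rayleigh_bound mu /\ forall m, rayleigh_bound m -> mu <= m.
Proof.
  intros Hu0 Hq0.
  set (E := fun r => exists u, rsum N u = 0 /\ 0 < dot N u u /\ r = qform N J u / dot N u u).
  assert (Hd0 : 0 < dot N u0 u0).
  { destruct (Rle_lt_or_eq_dec 0 _ (dot_nonneg N u0)) as [|Hd]; [assumption|].
    pose proof (qform_nonpos_of_dot_zero u0 (eq_sym Hd)). lra. }
  assert (Hratio : forall u m, 0 < dot N u u ->
            (qform N J u / dot N u u <= m <-> qform N J u <= m * dot N u u)).
  { intros u m Hd. unfold Rdiv. split; intros H.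
    - apply Rmult_le_reg_r with (/ dot N u u); [apply Rinv_0_lt_compat; lra|].
      rewrite Rmult_assoc, Rinv_r, Rmult_1_r by lra. exact H.
    - apply Rmult_le_reg_r with (dot N u u); [lra|].
      rewrite Rmult_assoc, Rinv_l, Rmult_1_r by lra. exact H. }
  assert (Hub : forall m, rayleigh_bound m -> is_upper_bound E m).
  { intros m Hm r [u [Hu [Hd ->]]]. apply Hratio; auto. }
  destruct (completeness E) as [mu [Hmu Hleast]].
  - exists (entry_norm N J). apply Hub. intros u _.
    pose proof (Rabs_qform_le N J u). pose proof (Rle_abs (qform N J u)). lra.
  - exists (qform N J u0 / dot N u0 u0), u0. auto.
  exists mu. split; [|split].
  - apply Rlt_le_trans with (qform N J u0 / dot N u0 u0).
    + apply Rdiv_lt_0_compat; assumption.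
    + apply Hmu. exists u0. auto.
  - intros u Hu. destruct (Rle_lt_or_eq_dec 0 _ (dot_nonneg N u)) as [Hd|Hd].
    + apply Hratio; [exact Hd|]. apply Hmu. exists u. auto.
    + rewrite <- Hd, Rmult_0_r. apply qform_nonpos_of_dot_zero. auto.
  - intros m Hm. apply Hleast, Hub, Hm.
Qed.

Definition sub_scalar_mx (mu : R) (i j : nat) : R :=
  J i j - (if Nat.eqb i j then mu else 0).

Lemma sub_scalar_mx_symmetric mu : symmetric_mx N (sub_scalar_mx mu).
Proof.
  intros i j Hi Hj. unfold sub_scalar_mx. rewrite Nat.eqb_sym, (HJ i j Hi Hj). reflexivity.
Qed.

Lemma matvec_sub_scalar_mx mu y i : (i < N)%nat ->
  matvec N (sub_scalar_mx mu) y i = matvec N J y i - mu * y i.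
Proof.
  intros Hi. unfold matvec, sub_scalar_mx.
  rewrite (rsum_ext N _ (fun j => J i j * y j - (if Nat.eqb i j then mu * y j else 0)))
    by (intros j _; destruct (Nat.eqb i j); ring).
  rewrite rsum_minus, rsum_delta by exact Hi. reflexivity.
Qed.

Lemma qform_sub_scalar_mx mu y :
  qform N (sub_scalar_mx mu) y = qform N J y - mu * dot N y y.
Proof.
  unfold qform.
  rewrite (dot_ext N _ _ y (fun i => matvec N J y i - mu * y i)) by
    (intros; try reflexivity; apply matvec_sub_scalar_mx; assumption).
  unfold dot. rewrite <- rsum_scal, <- rsum_minus. apply rsum_ext; intros; ring.
Qed.

Lemma sub_scalar_mx_nonpos mu : (0 < N)%nat -> 0 <= mu -> rayleigh_bound mu ->
  nonpos_form N (sub_scalar_mx mu).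
Proof.
  intros HN Hmu Hbound y. rewrite qform_sub_scalar_mx.
  destruct (decompose_mean_zero y HN) as [u [c [Hu ->]]].
  rewrite qform_add_const, dot_add_const by exact Hu.
  pose proof (Hbound u Hu). pose proof (pos_INR N).
  assert (0 <= mu * (c * c * INR N))
    by (apply Rmult_le_pos; [lra|apply Rmult_le_pos; [apply Rle_0_sqr|lra]]).
  lra.
Qed.

Lemma sub_scalar_mx_kernel_eigenpair mu w : mu <> 0 ->
  (forall i, (i < N)%nat -> matvec N (sub_scalar_mx mu) w i = 0) ->
  (exists i, (i < N)%nat /\ w i <> 0) ->
  eigenpair N J mu w /\ rsum N w = 0.
Proof.
  intros Hmu Hker Hnz.
  assert (Heig : forall i, (i < N)%nat -> matvec N J w i = mu * w i).
  { intros i Hi. pose proof (Hker i Hi). rewrite matvec_sub_scalar_mx in H by exact Hi. lra. }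
  split; [split; assumption|].
  pose proof (rsum_matvec_zero_rows w) as H.
  rewrite (rsum_ext N _ (fun i => mu * w i)), rsum_scal in H by exact Heig.
  destruct (Rmult_integral _ _ H); [contradiction | assumption].
Qed.

(* If the form took a positive value, the supremum [mu > 0] of its Rayleigh quotient
   on the complement of (1,...,1) would either be an eigenvalue there (when
   [J - mu] is singular) or could be lowered (when [J - mu] is invertible, hence
   coercive). *)
Lemma stable_nonpos_form :
  (forall mu w, eigenpair N J mu w -> rsum N w = 0 -> mu < 0) -> nonpos_form N J.
Proof.
  intros Hstab x. destruct (Rle_or_lt (qform N J x) 0) as [|Hpos]; [assumption|exfalso].
  assert (HN : (0 < N)%nat).
  { destruct N; [|lia]. unfold qform, dot in Hpos. simpl in Hpos. lra. }
  destruct (decompose_mean_zero x HN) as [u0 [c0 [Hu0 ->]]].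
  rewrite qform_add_const in Hpos.
  destruct (least_rayleigh_bound u0 Hu0 Hpos) as [mu [Hmu [Hbound Hleast]]].
  pose proof (sub_scalar_mx_nonpos mu HN (Rlt_le _ _ Hmu) Hbound) as Hneg.
  destruct (classic (exists w, (forall i, (i < N)%nat -> matvec N (sub_scalar_mx mu) w i = 0)
                       /\ exists i, (i < N)%nat /\ w i <> 0)) as [[w [Hker Hnz]]|Hinj].
  - destruct (sub_scalar_mx_kernel_eigenpair mu w (Rgt_not_eq _ _ Hmu) Hker Hnz) as [He Hs].
    pose proof (Hstab mu w He Hs). lra.
  - assert (Htriv : trivial_kernel N (sub_scalar_mx mu)).
    { intros w Hw i Hi. apply NNPP. intros Hwi. apply Hinj. exists w. split; eauto. }
    destruct (nonpos_form_coercive N _ (sub_scalar_mx_symmetric mu) Hneg Htriv)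
      as [eps [Heps Hcoer]].
    assert (rayleigh_bound (mu - eps)).
    { intros u Hu. pose proof (Hcoer u). rewrite qform_sub_scalar_mx in H. lra. }
    pose proof (Hleast _ H). lra.
Qed.

End StableForms.

Lemma derivable_pt_lim_rsum n (f : nat -> R -> R) (df : nat -> R) x :
  (forall i, (i < n)%nat -> derivable_pt_lim (f i) x (df i)) ->
  derivable_pt_lim (fun k => rsum n (fun i => f i k)) x (rsum n df).
Proof.
  induction n; intros H; simpl.
  - apply derivable_pt_lim_const.
  - apply (derivable_pt_lim_plus (fun k => rsum n (fun i => f i k)) (f n)).
    + apply IHn. intros; apply H; lia.
    + apply H; lia.
Qed.

Lemma derivable_pt_lim_sin_sub f g x lf lg :
  derivable_pt_lim f x lf -> derivable_pt_lim g x lg ->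
  derivable_pt_lim (fun k => sin (f k - g k)) x (cos (f x - g x) * (lf - lg)).
Proof.
  intros Hf Hg. apply (derivable_pt_lim_comp (fun k => f k - g k) sin).
  - apply derivable_pt_lim_minus; assumption.
  - apply derivable_pt_lim_sin.
Qed.

Lemma derivable_pt_lim_cos_sub f g x lf lg :
  derivable_pt_lim f x lf -> derivable_pt_lim g x lg ->
  derivable_pt_lim (fun k => cos (f k - g k)) x (- sin (f x - g x) * (lf - lg)).
Proof.
  intros Hf Hg. apply (derivable_pt_lim_comp (fun k => f k - g k) cos).
  - apply derivable_pt_lim_minus; assumption.
  - apply derivable_pt_lim_cos.
Qed.

Lemma derivable_pt_lim_locally_zero f x l a b : derivable_pt_lim f x l -> a < x < b ->
  (forall y, a < y < b -> f y = 0) -> l = 0.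
Proof.
  intros Hd Hx Hz. apply NNPP; intros Hl.
  destruct (Hd (Rabs l) (Rabs_pos_lt l Hl)) as [[d Hd0] Hdd]. simpl in Hdd.
  set (h := Rmin (d / 2) (Rmin ((b - x) / 2) ((x - a) / 2))).
  assert (Hh : 0 < h) by (unfold h; repeat apply Rmin_pos; lra).
  assert (Hhd : h <= d / 2) by apply Rmin_l.
  assert (Hhb : h <= (b - x) / 2) by (eapply Rle_trans; [apply Rmin_r|apply Rmin_l]).
  specialize (Hdd h (Rgt_not_eq _ _ Hh)).
  rewrite Rabs_pos_eq in Hdd by lra.
  specialize (Hdd ltac:(lra)).
  rewrite (Hz (x + h)), (Hz x) in Hdd by lra.
  replace ((0 - 0) / h - l) with (- l) in Hdd by (field; lra).
  rewrite Rabs_Ropp in Hdd. lra.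
Qed.

Lemma cos_sub_sym a b : cos (a - b) = cos (b - a).
Proof. rewrite <- cos_neg. f_equal. ring. Qed.

Lemma sin_sub_anti a b : sin (a - b) = - sin (b - a).
Proof. rewrite <- sin_neg. f_equal. ring. Qed.

Section Jacobian.
Variables (N : nat) (A : nat -> nat -> R) (K : R) (th : nat -> R).
Hypothesis HA : adjacency N A.

Lemma jacobian_symmetric : symmetric_mx N (jacobian N A K th).
Proof.
  destruct HA as [_ [Hsym _]].
  intros i j Hi Hj. unfold jacobian. destruct (Nat.eqb_spec i j).
  - subst. rewrite Nat.eqb_refl. reflexivity.
  - destruct (Nat.eqb_spec j i); [lia|]. rewrite (Hsym i j Hi Hj), cos_sub_sym. reflexivity.
Qed.

Lemma matvec_jacobian y i : (i < N)%nat ->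
  matvec N (jacobian N A K th) y i =
  K * rsum N (fun j => A i j * (cos (th j - th i) * (y j - y i))).
Proof.
  destruct HA as [_ [_ Hdiag]]. intros Hi. unfold matvec, jacobian.
  rewrite (rsum_ext N _ (fun j => (if Nat.eqb i j then
       (- K * rsum N (fun l => A i l * cos (th i - th l))) * y j else 0)
       + K * (A i j * cos (th i - th j) * y j))).
  2:{ intros j Hj. destruct (Nat.eqb_spec i j).
      - subst j. rewrite (Hdiag i Hi). ring.
      - ring. }
  rewrite rsum_plus, rsum_delta, rsum_scal by exact Hi.
  rewrite (rsum_ext N (fun j => A i j * (cos (th j - th i) * (y j - y i)))
     (fun j => A i j * cos (th i - th j) * y j - y i * (A i j * cos (th i - th j))))
    by (intros j _; rewrite (cos_sub_sym (th j)); ring).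
  rewrite rsum_minus, rsum_scal. ring.
Qed.

Lemma jacobian_row_sum i : (i < N)%nat -> rsum N (fun j => jacobian N A K th i j) = 0.
Proof.
  intros Hi. pose proof (matvec_jacobian (fun _ => 1) i Hi) as H. unfold matvec in H.
  rewrite (rsum_ext N (fun j => A i j * (cos (th j - th i) * (1 - 1))) (fun _ => 0)),
    rsum_0, Rmult_0_r in H by (intros; ring).
  rewrite <- H. apply rsum_ext. intros; ring.
Qed.

Lemma stable_jacobian_nonpos : stable N A K th -> nonpos_form N (jacobian N A K th).
Proof.
  apply stable_nonpos_form; [apply jacobian_symmetric | apply jacobian_row_sum].
Qed.

End Jacobian.

Lemma steady_state_linear_response N A omega (theta dtheta : R -> nat -> R) a b K :
  adjacency N A -> 0 < K -> a < K < b ->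
  (forall j, (j < N)%nat -> derivable_pt_lim (fun k => theta k j) K (dtheta K j)) ->
  (forall k, a < k < b -> steady_state N A omega k (theta k)) ->
  forall i, (i < N)%nat -> matvec N (jacobian N A K (theta K)) (dtheta K) i = omega i / K.
Proof.
  intros HA HK Hab Hd Hs i Hi.
  set (S k := rsum N (fun j => A i j * sin (theta k j - theta k i))).
  set (dS := rsum N (fun j => A i j * (cos (theta K j - theta K i) * (dtheta K j - dtheta K i)))).
  assert (Hder : derivable_pt_lim (fun k => omega i + k * S k) K (0 + (1 * S K + K * dS))).
  { apply (derivable_pt_lim_plus (fun _ => omega i)); [apply derivable_pt_lim_const|].
    apply (derivable_pt_lim_mult id S); [apply derivable_pt_lim_id|].
    apply (derivable_pt_lim_rsum N (fun j k => A i j * sin (theta k j - theta k i))).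
    intros j Hj. apply derivable_pt_lim_scal, derivable_pt_lim_sin_sub; auto. }
  assert (Hzero : 0 + (1 * S K + K * dS) = 0)
    by (apply (derivable_pt_lim_locally_zero _ _ _ a b Hder Hab); intros y Hy; apply Hs; auto).
  pose proof (Hs K Hab i Hi) as HsK. fold (S K) in HsK.
  rewrite matvec_jacobian by assumption. fold dS.
  apply Rmult_eq_reg_l with K; [|lra]. field_simplify; [|lra]. nra.
Qed.

Lemma r_uni_derivative N A (theta dtheta : R -> nat -> R) K :
  (forall i, (i < N)%nat -> derivable_pt_lim (fun k => theta k i) K (dtheta K i)) ->
  derivable_pt_lim (fun k => r_uni N A (theta k)) K
    (/ rsum N (fun i => degree N A i) *
     rsum N (fun i => rsum N (fun j =>
        A i j * (- sin (theta K i - theta K j) * (dtheta K i - dtheta K j))))).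
Proof.
  intros Hd.
  replace (fun k => r_uni N A (theta k)) with (fun k => / rsum N (fun i => degree N A i) *
      rsum N (fun i => rsum N (fun j => A i j * cos (theta k i - theta k j))))
    by (apply functional_extensionality; intros; unfold r_uni, Rdiv; ring).
  apply derivable_pt_lim_scal.
  apply (derivable_pt_lim_rsum N (fun i k => rsum N (fun j => A i j * cos (theta k i - theta k j)))).
  intros i Hi.
  apply (derivable_pt_lim_rsum N (fun j k => A i j * cos (theta k i - theta k j))).
  intros j Hj. apply derivable_pt_lim_scal, derivable_pt_lim_cos_sub; auto.
Qed.

(* Antisymmetry of [sin] turns the double sum into two copies of the single sums
   fixed by the steady-state equations. *)
Lemma steady_state_sin_sum N A omega K th d :
  adjacency N A -> 0 < K -> steady_state N A omega K th ->
  rsum N (fun i => rsum N (fun j => A i j * (- sin (th i - th j) * (d i - d j))))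
  = - (2 / K) * dot N d omega.
Proof.
  intros [_ [Hsym _]] HK Hs.
  assert (HSi : forall i, (i < N)%nat ->
            rsum N (fun j => A i j * sin (th j - th i)) = - omega i / K).
  { intros i Hi. pose proof (Hs i Hi) as H.
    set (S := rsum N (fun j => A i j * sin (th j - th i))) in *.
    replace (omega i) with (- K * S) by lra. field. lra. }
  rewrite (rsum_ext N _ (fun i => d i * rsum N (fun j => A i j * sin (th j - th i))
        - rsum N (fun j => A i j * sin (th j - th i) * d j))).
  2:{ intros i Hi. rewrite <- rsum_scal, <- rsum_minus. apply rsum_ext; intros j Hj.
      rewrite (sin_sub_anti (th i)). ring. }
  rewrite rsum_minus, rsum_swap.
  rewrite (rsum_ext N (fun i => d i * rsum N (fun j => A i j * sin (th j - th i)))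
             (fun i => - / K * (d i * omega i)))
    by (intros i Hi; rewrite HSi by exact Hi; field; lra).
  rewrite (rsum_ext N (fun j => rsum N (fun i => A i j * sin (th j - th i) * d j))
             (fun j => / K * (d j * omega j))).
  2:{ intros j Hj. rewrite (rsum_ext N _ (fun i => (- d j) * (A j i * sin (th i - th j)))).
      - rewrite rsum_scal, HSi by exact Hj. field. lra.
      - intros i Hi. rewrite (Hsym i j Hi Hj), (sin_sub_anti (th j)). ring. }
  rewrite !rsum_scal. unfold dot, Rdiv. ring.
Qed.

Lemma nonpos_form_eigen_response N J lam v d b :
  symmetric_mx N J -> nonpos_form N J ->
  (forall i, (i < N)%nat -> matvec N J v i = lam * v i) -> dot N v v = 1 ->
  (forall i, (i < N)%nat -> matvec N J d i = b i) ->
  dot N v b * dot N v b <= lam * dot N d b.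
Proof.
  intros HJ Hneg Hv Hunit Hd.
  pose proof (nonpos_form_cauchy_schwarz N J v d HJ Hneg) as Hcs.
  rewrite (dot_ext N v _ v b) in Hcs by auto.
  replace (qform N J v) with lam in Hcs.
  2:{ unfold qform. rewrite (dot_ext N v _ v (fun i => lam * v i)) by auto.
      unfold dot. rewrite (rsum_ext N _ (fun i => lam * (v i * v i))) by (intros; ring).
      rewrite rsum_scal. fold (dot N v v). rewrite Hunit. ring. }
  replace (qform N J d) with (dot N d b) in Hcs
    by (unfold qform; apply dot_ext; intros i Hi; rewrite ?Hd; auto).
  exact Hcs.
Qed.

Lemma r_uni_derivative_lower_bound N A omega (theta dtheta : R -> nat -> R) a b K lam v :
  adjacency N A -> 0 < K -> a < K < b -> rsum N (fun i => degree N A i) <> 0 ->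
  (forall j, (j < N)%nat -> derivable_pt_lim (fun k => theta k j) K (dtheta K j)) ->
  (forall k, a < k < b -> steady_state N A omega k (theta k)) ->
  stable N A K (theta K) ->
  eigenpair N (jacobian N A K (theta K)) lam v -> dot N v v = 1 ->
  exists l, derivable_pt_lim (fun k => r_uni N A (theta k)) K l /\
    dot N v omega * dot N v omega
    <= K * K * (- lam) * (rsum N (fun i => degree N A i) * l) / 2.
Proof.
  intros HA HK Hab HD Hd Hs Hstab [_ Heig] Hunit.
  eexists. split; [apply r_uni_derivative; exact Hd|].
  rewrite <- (Rmult_assoc (rsum N (fun i => degree N A i))), Rinv_r, Rmult_1_l by exact HD.
  rewrite (steady_state_sin_sum N A omega K (theta K) (dtheta K) HA HK (Hs K Hab)).
  pose proof (nonpos_form_eigen_response N _ lam v (dtheta K) (fun i => omega i / K)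
    (jacobian_symmetric N A K (theta K) HA) (stable_jacobian_nonpos N A K (theta K) HA Hstab)
    Heig Hunit (steady_state_linear_response N A omega theta dtheta a b K HA HK Hab Hd Hs))
    as Hresp.
  assert (Hdiv : forall u, dot N u (fun i => omega i / K) = dot N u omega / K).
  { intros u. unfold dot, Rdiv. rewrite Rmult_comm, <- rsum_scal. apply rsum_ext; intros; ring. }
  rewrite !Hdiv in Hresp.
  apply Rmult_le_compat_l with (r := K * K) in Hresp; [|nra].
  replace (K * K * (dot N v omega / K * (dot N v omega / K))) with
    (dot N v omega * dot N v omega) in Hresp by (field; lra).
  replace (K * K * (lam * (dot N (dtheta K) omega / K))) with
    (K * K * - lam * (- (2 / K) * dot N (dtheta K) omega) / 2) in Hresp by (field; lra).
  exact Hresp.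
Qed.

Lemma reachable_edge_or_refl N A i k : (i < N)%nat -> reachable N A i k ->
  k = i \/ exists j, (j < N)%nat /\ (k < N)%nat /\ A j k = 1.
Proof.
  intros Hi H. induction H as [|j k Hr IH Hk Ha]; [left; reflexivity|].
  right. destruct IH as [->|[j' [Hj' [Hj Ha']]]]; [exists i | exists j]; auto.
Qed.

Lemma degree_sum_pos N A : (2 <= N)%nat -> adjacency N A -> connected N A ->
  0 < rsum N (fun i => degree N A i).
Proof.
  intros HN [H01 _] Hc.
  destruct (reachable_edge_or_refl N A 0 1 ltac:(lia) (Hc 0%nat 1%nat ltac:(lia) ltac:(lia)))
    as [H|[j [Hj [H1 Ha]]]]; [discriminate|].
  assert (Hnn : forall i l, (i < N)%nat -> (l < N)%nat -> 0 <= A i l)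
    by (intros i l Hi Hl; destruct (H01 i l Hi Hl) as [-> | ->]; lra).
  assert (Hdeg : forall i, (i < N)%nat -> 0 <= degree N A i)
    by (intros; apply rsum_nonneg; intros; apply Hnn; auto).
  assert (A j 1%nat <= degree N A j) by (apply (rsum_ge_term N (fun l => A j l)); auto).
  assert (degree N A j <= rsum N (fun i => degree N A i))
    by (apply (rsum_ge_term N (fun i => degree N A i)); auto).
  lra.
Qed.

Lemma large_of_small_eigenvalue c x D B K mu l M :
  0 < c -> c <= Rabs x -> 0 < D -> 0 < K -> K * K <= B -> 0 < mu ->
  mu < 2 * (c * c) / (B * D * (Rabs M + 1)) ->
  x * x <= K * K * mu * (D * l) / 2 -> M <= l.
Proof.
  intros Hc Hcx HD HK HKB Hmu Hsmall' Hx.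
  assert (HB : 0 < B) by nra.
  pose proof (Rabs_pos M) as HM0.
  assert (HP : 0 < B * D * (Rabs M + 1)) by (repeat apply Rmult_lt_0_compat; lra).
  assert (Hsmall : mu * (B * D * (Rabs M + 1)) < 2 * (c * c)).
  { apply Rmult_lt_compat_r with (r := B * D * (Rabs M + 1)) in Hsmall'; [|exact HP].
    replace (2 * (c * c) / (B * D * (Rabs M + 1)) * (B * D * (Rabs M + 1)))
      with (2 * (c * c)) in Hsmall' by (field; repeat split; lra).
    exact Hsmall'. }
  assert (Hcc : c * c <= x * x).
  { assert (Rabs x * Rabs x = x * x)
      by (rewrite <- Rabs_mult; apply Rabs_right, Rle_ge, Rle_0_sqr).
    nra. }
  assert (HKmu : 0 < K * K * mu) by (apply Rmult_lt_0_compat; nra).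
  set (y := D * l) in *.
  assert (Hy : 0 < y) by nra.
  assert (K * K * (mu * y) <= B * (mu * y)) by (apply Rmult_le_compat_r; nra).
  assert (H2 : 2 * (c * c) <= B * mu * y) by nra.
  assert (HM : mu * (B * D * (Rabs M + 1)) < mu * (B * y)) by lra.
  assert (HM' : D * (Rabs M + 1) < y) by nra.
  assert (Rabs M + 1 < l) by (unfold y in HM'; nra).
  pose proof (Rle_abs M). lra.
Qed.

Theorem theorem1
  (N : nat) (A : nat -> nat -> R) (omega : nat -> R)
  (Kc2 K0 : R) (theta dtheta : R -> nat -> R)
  (lambda2 : R -> R) (v2 : R -> nat -> R)
  (HN : (2 <= N)%nat)
  (HA : adjacency N A) (Hconn : connected N A)
  (Homega : rsum N omega = 0)
  (HKc2 : 0 < Kc2) (HK0 : Kc2 < K0)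
  (Hdiff : forall K i, Kc2 < K < K0 -> (i < N)%nat ->
             derivable_pt_lim (fun k => theta k i) K (dtheta K i))
  (Hcont : forall K i, Kc2 < K < K0 -> (i < N)%nat ->
             continuity_pt (fun k => dtheta k i) K)
  (Hsteady : forall K, Kc2 < K < K0 -> steady_state N A omega K (theta K))
  (Hstable : forall K, Kc2 < K < K0 -> stable N A K (theta K))
  (Hl2neg : forall K, Kc2 < K < K0 -> lambda2 K < 0)
  (Hl2eig : forall K, Kc2 < K < K0 ->
             eigenpair N (jacobian N A K (theta K)) (lambda2 K) (v2 K))
  (Hv2unit : forall K, Kc2 < K < K0 -> dot N (v2 K) (v2 K) = 1)
  (Hl2max : forall K, Kc2 < K < K0 -> forall mu w,
             eigenpair N (jacobian N A K (theta K)) mu w -> mu <> 0 ->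
             mu <= lambda2 K)
  (Hl2lim : forall eps, 0 < eps -> exists delta, 0 < delta /\
             forall K, Kc2 < K < K0 -> K < Kc2 + delta -> Rabs (lambda2 K) < eps)
  (Hv2om : exists c delta, 0 < c /\ 0 < delta /\
             forall K, Kc2 < K < K0 -> K < Kc2 + delta ->
               c <= Rabs (dot N (v2 K) omega)) :
  forall M, exists delta, 0 < delta /\
    forall K, Kc2 < K < K0 -> K < Kc2 + delta ->
      exists l, derivable_pt_lim (fun k => r_uni N A (theta k)) K l /\ M <= l.
Proof.
  intros M.
  destruct Hv2om as [c [d1 [Hc [Hd1 Hv]]]].
  pose proof (degree_sum_pos N A HN HA Hconn) as HD.
  set (D := rsum N (fun i => degree N A i)) in *.
  set (B := (Kc2 + 1) * (Kc2 + 1)).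
  set (eps := 2 * (c * c) / (B * D * (Rabs M + 1))).
  assert (Heps : 0 < eps).
  { pose proof (Rabs_pos M). apply Rdiv_lt_0_compat; [nra|].
    repeat apply Rmult_lt_0_compat; unfold B; nra. }
  destruct (Hl2lim eps Heps) as [d2 [Hd2 Hl]].
  exists (Rmin d1 (Rmin d2 1)). split; [repeat apply Rmin_pos; lra|].
  intros K HK HKd.
  pose proof (Rmin_l d1 (Rmin d2 1)). pose proof (Rmin_r d1 (Rmin d2 1)).
  pose proof (Rmin_l d2 1). pose proof (Rmin_r d2 1).
  destruct (r_uni_derivative_lower_bound N A omega theta dtheta Kc2 K0 K (lambda2 K) (v2 K)
              HA ltac:(lra) HK (Rgt_not_eq _ _ HD) (fun j Hj => Hdiff K j HK Hj) Hsteady (Hstable K HK)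
              (Hl2eig K HK) (Hv2unit K HK)) as [l [Hder Hbound]].
  exists l. split; [exact Hder|].
  pose proof (Hl K HK ltac:(lra)) as Hsmall. pose proof (Hl2neg K HK).
  rewrite Rabs_left in Hsmall by assumption.
  apply (large_of_small_eigenvalue c (dot N (v2 K) omega) D B K (- lambda2 K) l M);
    try assumption; try lra.
  - apply Hv; lra.
  - unfold B. nra.
Qed.
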